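(* Let $A\in\mathbb{R}^{m\times n}$ and $B\in\mathbb{R}^{p\times n}$ be such that the stacked matrix $Z=\begin{bmatrix}A\\ B\end{bmatrix}$ has full column rank, and let $Z=QR=\begin{bmatrix}Q_A\\ Q_B\end{bmatrix}R$ be its thin QR decomposition, with $Q\in\mathbb{R}^{(m+p)\times n}$ having orthonormal columns, $Q_A\in\mathbb{R}^{m\times n}$, $Q_B\in\mathbb{R}^{p\times n}$, and $R\in\mathbb{R}^{n\times n}$ upper triangular and nonsingular. Let $k\ge 1$ and suppose matrices $V_k\in\mathbb{R}^{n\times k}$, $U_{k+1}\in\mathbb{R}^{m\times(k+1)}$, $\widehat U_k\in\mathbb{R}^{p\times k}$, a unit vector $v_{k+1}\in\mathbb{R}^n$, scalars $\alpha_{k+1},\check\beta_k\in\mathbb{R}$, and matrices $J_k\in\mathbb{R}^{(k+1)\times k}$, $\check J_k\in\mathbb{R}^{k\times k}$ satisfy $$Q_AV_k=U_{k+1}J_k,\quad Q_A^TU_{k+1}=V_kJ_k^T+\alpha_{k+1}v_{k+1}e_{k+1}^T,$$ $$Q_BV_k=\widehat U_k\check J_k,\quad Q_B^T\widehat U_k=V_k\check J_k^T+\check\beta_kv_{k+1}e_k^T,$$ where $e_j$ denotes the $j$th canonical basis vector of the appropriate dimension. Suppose further that $J_k=X_{k+1}\begin{bmatrix}C_k\\ 0\end{bmatrix}Y_k^T$ and $\check J_k=\widehat X_kS_kY_k^T$, where $X_{k+1}\in\mathbb{R}^{(k+1)\times(k+1)}$, $\widehat X_k,Y_k\in\mathbb{R}^{k\times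 k}$ are orthogonal and $C_k=\mathrm{diag}(\tilde c_1,\dots,\tilde c_k)$, $S_k=\mathrm{diag}(\tilde s_1,\dots,\tilde s_k)$ are diagonal with $\tilde c_i^2+\tilde s_i^2=1$ for all $i$. For $i=1,\dots,k$ let $x_i$, $\hat x_i$, $y_i$ be the $i$th columns of $X_{k+1}$, $\widehat X_k$, $Y_k$, and define $\tilde u_i^A=U_{k+1}x_i$, $\tilde u_i^B=\widehat U_k\hat x_i$, $\tilde g_i=R^{-1}V_ky_i$. Then for each $i=1,\dots,k$, $$\sqrt{\big\|\tilde s_i^2A^T\tilde u_i^A-\tilde c_iB^TB\tilde g_i\big\|_2^2+\big\|\tilde c_i^2B^T\tilde u_i^B-\tilde s_iA^TA\tilde g_i\big\|_2^2}\;\le\;\sqrt{\big(\alpha_{k+1}e_{k+1}^Tx_i\big)^2+\big(\check\beta_ke_k^T\hat x_i\big)^2}\;\|R\|_2 .$$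
   Context: These relations arise from the lower-upper joint Lanczos bidiagonalization of $Q_A$ and $Q_B$ (with $J_k$ lower bidiagonal and $\check J_k$ upper bidiagonal) followed by a CS decomposition of the projected pair $\{J_k,\check J_k\}$; the quadruple $(\tilde c_i/\tilde s_i,\tilde u_i^A,\tilde u_i^B,\tilde g_i)$ is an approximate generalized singular quadruple of the pair $\{A,B\}$, and the left-hand side of the inequality is the residual norm $\|r^{\mathrm{GSVD}}\|_2$ used as a convergence criterion. *)

From HB Require Import structures.
From mathcomp Require Import all_boot all_order all_algebra.
From mathcomp Require Import boolp classical_sets reals.
Set Implicit Arguments. Unset Strict Implicit. Unset Printing Implicit Defensive.
Import Order.TTheory GRing.Theory Num.Theory.
Local Open Scope ring_scope.
Local Open Scope classical_set_scope.

Definition vnorm2 {R : realType} {n : nat} (x : 'cV[R]_n) : R :=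
  Num.sqrt (\sum_(i < n) x i 0 ^+ 2).

Definition specnorm {R : realType} {m n : nat} (M : 'M[R]_(m, n)) : R :=
  sup [set vnorm2 (M *m x) | x in [set x : 'cV[R]_n | vnorm2 x = 1]].

(* canonical basis column vector e_{j+1} (0-based index j) *)
Definition evec {R : realType} (n j : nat) : 'cV[R]_n :=
  \col_(i < n) ((i : nat) == j)%:R.

Definition upper_tri {R : realType} {n : nat} (M : 'M[R]_n) : Prop :=
  forall i j : 'I_n, (j < i)%N -> M i j = 0.

Definition diag_pad {R : realType} {k : nat} (c : 'rV[R]_k) : 'M[R]_(k.+1, k) :=
  \matrix_(i < k.+1, j < k) (if (i : nat) == (j : nat) then c 0 j else 0).

From HB Require Import structures.
From mathcomp Require Import all_boot all_order all_algebra.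
From mathcomp Require Import boolp classical_sets reals.
From mathcomp Require Import ring lra.
Import Order.TTheory GRing.Theory Num.Theory.
Local Open Scope ring_scope.
Set Implicit Arguments. Unset Strict Implicit.

(* With [w := V_k y_i = R g], the bidiagonalization relations and the CS
   decomposition of [{J_k, Jc_k}] give
     [Q_A^T u^A = c w + a v],  [Q_B^T u^B = s w + b v],
     [Q_A w = c u^A],          [Q_B w = s u^B],
   where [a = alpha e_(k+1)^T x_i] and [b = betac e_k^T xh_i].  Substituting
   [A = Q_A R] and [B = Q_B R], the [w]-terms cancel and both residual
   components become multiples of [R^T v], with coefficients [s (s a - c b)]
   and [- c (s a - c b)].  As [c^2 + s^2 = 1], the residual norm is
   [|s a - c b| ||R^T v|| <= sqrt (a^2 + b^2) ||R||_2]. *)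

Section OrthogonalFactorization.
Variable F : comNzRingType.
Implicit Types (m n l q : nat).

Lemma mulmx_orthofactor_col m n l q (X : 'M[F]_(m, n)) (D : 'M[F]_(n, l))
    (Y : 'M[F]_(q, l)) (i : 'I_l) :
  Y^T *m Y = 1%:M -> X *m D *m Y^T *m col i Y = X *m col i D.
Proof.
by move=> orthoY; rewrite !colE !mulmxA -(mulmxA (X *m D)) orthoY mulmx1.
Qed.

Lemma trmx_orthofactor_col m n l q (X : 'M[F]_(m, n)) (D : 'M[F]_(n, l))
    (Y : 'M[F]_(q, l)) (j : 'I_n) :
  X^T *m X = 1%:M -> (X *m D *m Y^T)^T *m col j X = Y *m col j D^T.
Proof.
by move=> orthoX; rewrite !trmx_mul trmxK mulmxA; apply: mulmx_orthofactor_col.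
Qed.

Lemma mulmx_rank1_update n k q (V : 'M[F]_(n, k)) (Jt : 'M[F]_(k, q))
    (v : 'cV[F]_n) (e x : 'cV[F]_q) (y : 'cV[F]_k) (a t : F) :
  Jt *m x = t *: y ->
  (V *m Jt + a *: (v *m e^T)) *m x = t *: (V *m y) + (a * (e^T *m x) 0 0) *: v.
Proof.
move=> Jtx; rewrite mulmxDl -mulmxA Jtx -scalemxAr -scalemxAl -mulmxA.
by rewrite {1}[e^T *m x]mx11_scalar mul_mx_scalar scalerA.
Qed.

Lemma gsvd_residual_eq m p n (A QA : 'M[F]_(m, n)) (B QB : 'M[F]_(p, n))
    (Rm : 'M[F]_n) (uA : 'cV[F]_m) (uB : 'cV[F]_p) (g v : 'cV[F]_n) (c s a b : F) :
  A = QA *m Rm -> B = QB *m Rm ->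
  QA^T *m uA = c *: (Rm *m g) + a *: v ->
  QB *m (Rm *m g) = s *: uB ->
  QB^T *m uB = s *: (Rm *m g) + b *: v ->
  s ^+ 2 *: (A^T *m uA) - c *: (B^T *m B *m g)
    = (s ^+ 2 * a - c * s * b) *: (Rm^T *m v).
Proof.
move=> -> -> QAuA QBw QBuB.
rewrite !trmx_mul -!mulmxA QAuA QBw -scalemxAr QBuB -scalemxAr !mulmxDr -!scalemxAr.
move: (Rm^T *m (Rm *m g)) (Rm^T *m v) => P Qv.
by apply/matrixP => i j; rewrite !mxE; ring.
Qed.

End OrthogonalFactorization.

Section PaddedDiagonal.
Variable R : realType.

Lemma col_diag_mx k (s : 'rV[R]_k) (i : 'I_k) :
  col i (diag_mx s) = s 0 i *: delta_mx i 0.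
Proof.
apply/matrixP => a b; rewrite !mxE [b]ord1 eqxx andbT.
by case: (eqVneq a i) => [->|]; rewrite ?mulr1 ?mulr0.
Qed.

Lemma col_diag_pad k (c : 'rV[R]_k) (i : 'I_k) :
  col i (diag_pad c) = c 0 i *: delta_mx (widen_ord (leqnSn k) i) 0.
Proof.
apply/matrixP => a b; rewrite !mxE [b]ord1 eqxx andbT.
have -> : (a == widen_ord (leqnSn k) i) = ((a : nat) == i) by [].
by case: eqP => _; rewrite ?mulr1 ?mulr0.
Qed.

Lemma col_widen_trmx_diag_pad k (c : 'rV[R]_k) (i : 'I_k) :
  col (widen_ord (leqnSn k) i) (diag_pad c)^T = c 0 i *: delta_mx i 0.
Proof.
apply/matrixP => a b; rewrite !mxE [b]ord1 eqxx andbT.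
case: (eqVneq a i) => [->|neq_ai]; first by rewrite eqxx mulr1.
rewrite mulr0; case: eqP => // eq_ia.
by case/eqP: neq_ai; apply: val_inj.
Qed.

End PaddedDiagonal.

Section EuclideanNorm.
Variable R : realType.
Implicit Types (m n : nat).

Lemma sumr_sqr_ge0 n (a : 'I_n -> R) : 0 <= \sum_i a i ^+ 2.
Proof. by apply: sumr_ge0 => i _; apply: sqr_ge0. Qed.

Lemma vnorm2_ge0 n (x : 'cV[R]_n) : 0 <= vnorm2 x.
Proof. exact: sqrtr_ge0. Qed.

Lemma vnorm2_sqr n (x : 'cV[R]_n) : vnorm2 x ^+ 2 = \sum_i x i 0 ^+ 2.
Proof. by rewrite sqr_sqrtr // sumr_sqr_ge0. Qed.

Lemma vnorm2Z n (t : R) (x : 'cV[R]_n) : vnorm2 (t *: x) = `|t| * vnorm2 x.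
Proof.
rewrite /vnorm2 -sqrtr_sqr -sqrtrM ?sqr_ge0 // mulr_sumr.
by congr Num.sqrt; apply: eq_bigr => i _; rewrite mxE exprMn.
Qed.

Lemma vnorm2_eq0 n (x : 'cV[R]_n) : (vnorm2 x == 0) = (x == 0).
Proof.
apply/idP/eqP => [|->]; last first.
  by rewrite /vnorm2 big1 ?sqrtr0 // => i _; rewrite mxE expr0n.
rewrite /vnorm2 sqrtr_eq0 => sum_le0.
have : \sum_i x i 0 ^+ 2 == 0 by rewrite eq_le sum_le0 sumr_sqr_ge0.
rewrite psumr_eq0 => [/allP x0|i _]; last exact: sqr_ge0.
apply/matrixP => i j; rewrite [j]ord1 mxE; apply/eqP.
by have := x0 i (mem_index_enum i); rewrite sqrf_eq0.
Qed.

Lemma vnorm20 n : vnorm2 (0 : 'cV[R]_n) = 0.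
Proof. by apply/eqP; rewrite vnorm2_eq0. Qed.

(* Lagrange's identity: the defect in Cauchy-Schwarz is a sum of squares. *)
Lemma sumr_mul_sqr_le n (a b : 'I_n -> R) :
  (\sum_i a i * b i) ^+ 2 <= (\sum_i a i ^+ 2) * (\sum_i b i ^+ 2).
Proof.
set A2 := \sum_i a i ^+ 2; set B2 := \sum_i b i ^+ 2; set AB := \sum_i a i * b i.
have lagrange_id : \sum_i \sum_j (a i * b j - a j * b i) ^+ 2
    = 2 * (A2 * B2) - 2 * AB ^+ 2.
  transitivity (\sum_i (a i ^+ 2 * B2 + A2 * b i ^+ 2 - 2 * (a i * b i) * AB)).
    apply: eq_bigr => i _.
    rewrite /A2 /B2 /AB mulr_sumr mulr_suml mulr_sumr -big_split -sumrB /=.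
    by apply: eq_bigr => j _; ring.
  by rewrite sumrB big_split /= -!mulr_suml -!mulr_sumr -/A2 -/B2 -/AB; ring.
have : 0 <= \sum_i \sum_j (a i * b j - a j * b i) ^+ 2.
  by apply: sumr_ge0 => i _; apply: sumr_sqr_ge0.
by rewrite lagrange_id; lra.
Qed.

Lemma dotmx_le_vnorm2 n (x y : 'cV[R]_n) :
  (x^T *m y) 0 0 <= vnorm2 x * vnorm2 y.
Proof.
rewrite -sqrtrM ?sumr_sqr_ge0 //; apply: le_trans (ler_norm _) _.
rewrite -sqrtr_sqr ler_sqrt ?mulr_ge0 ?sumr_sqr_ge0 // mxE.
under eq_bigr do rewrite mxE.
exact: sumr_mul_sqr_le.
Qed.

Lemma cs_residual_le n (c s a b : R) (q : 'cV[R]_n) :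
  c ^+ 2 + s ^+ 2 = 1 ->
  Num.sqrt (vnorm2 ((s ^+ 2 * a - c * s * b) *: q) ^+ 2
          + vnorm2 ((c ^+ 2 * b - s * c * a) *: q) ^+ 2)
  <= Num.sqrt (a ^+ 2 + b ^+ 2) * vnorm2 q.
Proof.
move=> cs1; rewrite !vnorm2Z !exprMn !real_normK ?num_real // -mulrDl.
rewrite sqrtrM ?addr_ge0 ?sqr_ge0 // sqrtr_sqr ger0_norm ?vnorm2_ge0 //.
rewrite ler_wpM2r ?vnorm2_ge0 // ler_sqrt ?addr_ge0 ?sqr_ge0 //.
have -> : (s ^+ 2 * a - c * s * b) ^+ 2 + (c ^+ 2 * b - s * c * a) ^+ 2
    = (c ^+ 2 + s ^+ 2) * (s * a - c * b) ^+ 2 by ring.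
have -> : a ^+ 2 + b ^+ 2 = (s * a - c * b) ^+ 2 + (c * a + s * b) ^+ 2.
  by rewrite -[LHS]mul1r -cs1; ring.
by rewrite cs1 mul1r lerDl sqr_ge0.
Qed.

End EuclideanNorm.

Section SpectralNorm.
Variable R : realType.
Implicit Types (m n : nat).

Lemma has_sup_specnorm m n (M : 'M[R]_(m, n)) (x : 'cV[R]_n) :
  vnorm2 x = 1 ->
  has_sup [set vnorm2 (M *m y) | y in [set y : 'cV[R]_n | vnorm2 y = 1]].
Proof.
move=> unit_x; split; first by exists (vnorm2 (M *m x)), x.
exists (Num.sqrt (\sum_i \sum_j M i j ^+ 2)) => _ [y unit_y <-].
rewrite /vnorm2 ler_sqrt; last by apply: sumr_ge0 => i _; apply: sumr_sqr_ge0.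
apply: ler_sum => i _; rewrite mxE.
have y2 : \sum_j y j 0 ^+ 2 = 1 by rewrite -vnorm2_sqr unit_y expr1n.
by have := sumr_mul_sqr_le (M i) (fun j => y j 0); rewrite y2 mulr1.
Qed.

Lemma vnorm2_mulmx_unit_le m n (M : 'M[R]_(m, n)) (x : 'cV[R]_n) :
  vnorm2 x = 1 -> vnorm2 (M *m x) <= specnorm M.
Proof.
by move=> unit_x; apply: sup_upper_bound (has_sup_specnorm M unit_x) _ _; exists x.
Qed.

Lemma specnorm_ge0 m n (M : 'M[R]_(m, n)) : 0 <= specnorm M.
Proof.
rewrite /specnorm; set E := (X in sup X).
have [->|/set0P [_ [x unit_x _]]] := eqVneq E set0; first by rewrite sup0.
exact: le_trans (vnorm2_ge0 _) (vnorm2_mulmx_unit_le M unit_x).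
Qed.

Lemma vnorm2_mulmx_le m n (M : 'M[R]_(m, n)) (x : 'cV[R]_n) :
  vnorm2 (M *m x) <= specnorm M * vnorm2 x.
Proof.
have [->|x_neq0] := eqVneq x 0.
  by rewrite mulmx0 !vnorm20 mulr0.
have x_gt0 : 0 < vnorm2 x by rewrite lt_def vnorm2_eq0 x_neq0 vnorm2_ge0.
have unit_x : vnorm2 ((vnorm2 x)^-1 *: x) = 1.
  by rewrite vnorm2Z ger0_norm ?invr_ge0 ?vnorm2_ge0 // mulVf ?gt_eqF.
have := vnorm2_mulmx_unit_le M unit_x.
by rewrite -scalemxAr vnorm2Z ger0_norm ?invr_ge0 ?vnorm2_ge0 // ler_pdivrMl // mulrC.
Qed.

Lemma vnorm2_trmx_mul_le m n (M : 'M[R]_(m, n)) (v : 'cV[R]_m) :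
  vnorm2 (M^T *m v) <= specnorm M * vnorm2 v.
Proof.
set w := M^T *m v.
have w2 : vnorm2 w ^+ 2 <= vnorm2 v * (specnorm M * vnorm2 w).
  have -> : vnorm2 w ^+ 2 = (v^T *m (M *m w)) 0 0.
    rewrite vnorm2_sqr mulmxA -[v^T *m M]trmxK trmx_mul trmxK -/w mxE.
    by apply: eq_bigr => i _; rewrite !mxE expr2.
  apply: le_trans (dotmx_le_vnorm2 _ _) _.
  by rewrite ler_wpM2l ?vnorm2_ge0 ?vnorm2_mulmx_le.
have [w0|w_neq0] := eqVneq (vnorm2 w) 0.
  by rewrite w0 mulr_ge0 ?specnorm_ge0 ?vnorm2_ge0.
have w_gt0 : 0 < vnorm2 w by rewrite lt_def w_neq0 vnorm2_ge0.
rewrite -(ler_pM2r w_gt0) -expr2 (le_trans w2) //.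
by rewrite mulrCA mulrA.
Qed.

End SpectralNorm.

Theorem mainTheorem1 (R : realType) (m p n k : nat)
  (A : 'M[R]_(m, n)) (B : 'M[R]_(p, n))
  (QA : 'M[R]_(m, n)) (QB : 'M[R]_(p, n)) (Rm : 'M[R]_n)
  (Vk : 'M[R]_(n, k)) (U : 'M[R]_(m, k.+1)) (Uh : 'M[R]_(p, k))
  (v : 'cV[R]_n) (alpha betac : R)
  (J : 'M[R]_(k.+1, k)) (Jc : 'M[R]_k)
  (X : 'M[R]_k.+1) (Xh Y : 'M[R]_k) (c s : 'rV[R]_k) :
  \rank (col_mx A B) = n ->
  col_mx A B = col_mx QA QB *m Rm ->
  (col_mx QA QB)^T *m col_mx QA QB = 1%:M ->
  upper_tri Rm -> Rm \in unitmx ->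
  (0 < k)%N ->
  vnorm2 v = 1 ->
  QA *m Vk = U *m J ->
  QA^T *m U = Vk *m J^T + alpha *: (v *m (evec k.+1 k)^T) ->
  QB *m Vk = Uh *m Jc ->
  QB^T *m Uh = Vk *m Jc^T + betac *: (v *m (evec k k.-1)^T) ->
  J = X *m diag_pad c *m Y^T ->
  Jc = Xh *m diag_mx s *m Y^T ->
  X^T *m X = 1%:M -> Xh^T *m Xh = 1%:M -> Y^T *m Y = 1%:M ->
  (forall i : 'I_k, c 0 i ^+ 2 + s 0 i ^+ 2 = 1) ->
  forall i : 'I_k,
    let xi := col (widen_ord (leqnSn k) i) X in
    let xhi := col i Xh in
    let yi := col i Y in
    let uA := U *m xi in
    let uB := Uh *m xhi in
    let g := invmx Rm *m Vk *m yi in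
    Num.sqrt (vnorm2 (s 0 i ^+ 2 *: (A^T *m uA) - c 0 i *: (B^T *m B *m g)) ^+ 2
            + vnorm2 (c 0 i ^+ 2 *: (B^T *m uB) - s 0 i *: (A^T *m A *m g)) ^+ 2)
    <= Num.sqrt ((alpha * ((evec k.+1 k)^T *m xi) 0 0) ^+ 2
               + (betac * ((evec k k.-1)^T *m xhi) 0 0) ^+ 2) * specnorm Rm.
Proof.
move=> _ QR_AB _ _ Rm_unit _ unit_v QAV QAU QBV QBU J_eq Jc_eq orthoX orthoXh orthoY cs1.
move=> i; rewrite /is_true; cbv zeta.
set xi := col _ X; set xhi := col i Xh; set yi := col i Y.
set uA := U *m xi; set uB := Uh *m xhi; set g := invmx Rm *m Vk *m yi.
rewrite mul_col_mx in QR_AB; case/eq_col_mx: QR_AB => A_eq B_eq.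
set ci := c 0 i; set si := s 0 i.
have Jy : J *m yi = ci *: xi.
  by rewrite J_eq mulmx_orthofactor_col // col_diag_pad -scalemxAr -colE.
have JTx : J^T *m xi = ci *: yi.
  by rewrite J_eq trmx_orthofactor_col // col_widen_trmx_diag_pad -scalemxAr -colE.
have Jcy : Jc *m yi = si *: xhi.
  by rewrite Jc_eq mulmx_orthofactor_col // col_diag_mx -scalemxAr -colE.
have JcTx : Jc^T *m xhi = si *: yi.
  by rewrite Jc_eq trmx_orthofactor_col // tr_diag_mx col_diag_mx -scalemxAr -colE.
have Rg : Rm *m g = Vk *m yi by rewrite /g -mulmxA mulKVmx.
have QAuA : QA^T *m uA = ci *: (Rm *m g) + (alpha * ((evec k.+1 k)^T *m xi) 0 0) *: v.
  by rewrite Rg mulmxA QAU (mulmx_rank1_update _ _ _ _ JTx).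
have QBuB : QB^T *m uB = si *: (Rm *m g) + (betac * ((evec k k.-1)^T *m xhi) 0 0) *: v.
  by rewrite Rg mulmxA QBU (mulmx_rank1_update _ _ _ _ JcTx).
have QAw : QA *m (Rm *m g) = ci *: uA by rewrite Rg mulmxA QAV -mulmxA Jy -scalemxAr.
have QBw : QB *m (Rm *m g) = si *: uB by rewrite Rg mulmxA QBV -mulmxA Jcy -scalemxAr.
rewrite (gsvd_residual_eq A_eq B_eq QAuA QBw QBuB).
rewrite (gsvd_residual_eq B_eq A_eq QBuB QAw QAuA).
apply: le_trans (cs_residual_le _ _ _ (cs1 i)) _.
by rewrite ler_wpM2l ?sqrtr_ge0 // -[specnorm Rm]mulr1 -unit_v vnorm2_trmx_mul_le.
Qed.
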